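(* Let $B\wr\mathcal{H}(d)$ be a quantum wreath product as in the context, and suppose $B$ has an algebra anti-automorphism $b\mapsto b^*$; extend it factorwise to $B^{\otimes k}$. Let $A$ be the free associative $K$-algebra generated by $B^{\otimes d}$ and symbols $H_1,\dots,H_{d-1}$, and let $*:A\to B\wr\mathcal{H}(d)$ be the algebra anti-homomorphism with $b_1\otimes\cdots\otimes b_d\mapsto b_1^*\otimes\cdots\otimes b_d^*$ and $H_i\mapsto H_i$. Then $*$ induces an anti-homomorphism $B\wr\mathcal{H}(d)\to B\wr\mathcal{H}(d)$ if and only if (1) $\sigma(S^* )=S$ and $\rho(S^* )+R^*=R$; (2) for all $b\in B\otimes B$: $\sigma(\sigma(b)^* )=b^*$ and $\rho(\sigma(b)^* )+\rho(b)^*=0$. In this case $*$ is an anti-automorphism of $B\wr\mathcal{H}(d)$.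
   Context: Let $K$ be a commutative ring and $B$ a unital associative $K$-algebra, free over $K$; tensor products over $K$. Fix $d\ge2$, $S,R\in B\otimes B$ and $K$-linear maps $\sigma,\rho:B\otimes B\to B\otimes B$. For $Z\in B\otimes B$, $Z_i:=1^{\otimes(i-1)}\otimes Z\otimes1^{\otimes(d-i-1)}\in B^{\otimes d}$; for $\phi\in\mathrm{End}_K(B\otimes B)$, $\phi_i$ is $\phi$ applied to tensor factors $i,i+1$ of $B^{\otimes d}$. The quantum wreath product $B\wr\mathcal{H}(d)$ is the unital $K$-algebra generated by the algebra $B^{\otimes d}$ and $H_1,\dots,H_{d-1}$ subject to $H_kH_{k+1}H_k=H_{k+1}H_kH_{k+1}$, $H_iH_j=H_jH_i$ ($|i-j|\ge2$), $H_i^2=S_iH_i+R_i$, $H_ib=\sigma_i(b)H_i+\rho_i(b)$ ($b\in B^{\otimes d}$). With $H_w$ defined via reduced expressions of $w\in\Sigma_d$, it is assumed that $B\wr\mathcal{H}(d)$ has a PBW basis $\{(b_{j_1}\otimes\cdots\otimes b_{j_d})H_w\}$ for a $K$-basis $\{b_j\}$ of $B$. *)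

From HB Require Import structures.
From mathcomp Require Import all_boot all_order all_fingroup all_algebra.
Set Implicit Arguments. Unset Strict Implicit. Unset Printing Implicit Defensive.
Import GRing.Theory.
Local Open Scope ring_scope.

Section QWP.
Variable K : comNzRingType.

Definition klinear (M N : lmodType K) (f : M -> N) :=
  forall (a : K) (x y : M), f (a *: x + y) = a *: f x + f y.

Definition alg_hom (A C : algType K) (f : A -> C) :=
  [/\ klinear f, (forall x y, f (x * y) = f x * f y) & f 1 = 1].
Definition alg_antihom (A C : algType K) (f : A -> C) :=
  [/\ klinear f, (forall x y, f (x * y) = f y * f x) & f 1 = 1].
Definition alg_antiaut (A : algType K) (f : A -> A) :=
  alg_antihom f /\ bijective f.

Definition spans (M : lmodType K) (J : Type) (e : J -> M) :=
  forall x : M, exists n (k : 'I_n -> J) (c : 'I_n -> K),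
    x = \sum_(m < n) c m *: e (k m).
Definition lin_indep (M : lmodType K) (J : Type) (e : J -> M) :=
  forall n (k : 'I_n -> J) (c : 'I_n -> K), injective k ->
    \sum_(m < n) c m *: e (k m) = 0 -> forall m, c m = 0.
Definition is_basis (M : lmodType K) (J : Type) (e : J -> M) :=
  spans e /\ lin_indep e.

Variable B : algType K.

Definition upd n (x : {ffun 'I_n -> B}) (i : 'I_n) (u : B) : {ffun 'I_n -> B} :=
  [ffun j => if j == i then u else x j].
Definition multilinear n (X : lmodType K) (f : {ffun 'I_n -> B} -> X) :=
  forall x i (a : K) u v,
    f (upd x i (a *: u + v)) = a *: f (upd x i u) + f (upd x i v).
Definition is_tensor_power n (T : algType K) (t : {ffun 'I_n -> B} -> T) :=
  [/\ multilinear t,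
      t [ffun => (1 : B)] = 1,
      (forall x y, t x * t y = t [ffun j => x j * y j]) &
      (forall (X : lmodType K) (f : {ffun 'I_n -> B} -> X), multilinear f ->
         (exists g : T -> X, klinear g /\ forall x, g (t x) = f x) /\
         (forall g1 g2 : T -> X, klinear g1 -> klinear g2 ->
            (forall x, g1 (t x) = g2 (t x)) -> forall y, g1 y = g2 y))].

Definition pair2 (a c : B) : {ffun 'I_2 -> B} :=
  [ffun k => if val k == 0%N then a else c].
(* x with entries at (0-based) positions i, i+1 replaced by a, c *)
Definition ins d (x : {ffun 'I_d -> B}) (i : nat) (a c : B) : {ffun 'I_d -> B} :=
  [ffun j => if val j == i then a else if val j == i.+1 then c else x j].

Definition tensor_ext n (T : algType K) (t : {ffun 'I_n -> B} -> T)
  (st : B -> B) (stT : T -> T) :=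
  klinear stT /\ forall x, stT (t x) = t [ffun j => st (x j)].

(* Z i = Z_{i+1} : B(x)B -> B^{(x)d}, placing Z in factors i, i+1 (0-based) *)
Definition is_Zins d (T2 : algType K) (t2 : {ffun 'I_2 -> B} -> T2)
  (Td : algType K) (td : {ffun 'I_d -> B} -> Td) (Z : nat -> T2 -> Td) :=
  forall i, (i.+1 < d)%N ->
    klinear (Z i) /\
    forall a c, Z i (t2 (pair2 a c)) = td (ins [ffun => (1 : B)] i a c).

(* phiD i = phi_{i+1} : phi applied to the factors i, i+1 (0-based) *)
Definition is_lift d (T2 : algType K) (t2 : {ffun 'I_2 -> B} -> T2)
  (Td : algType K) (td : {ffun 'I_d -> B} -> Td) (Z : nat -> T2 -> Td)
  (phi : T2 -> T2) (phiD : nat -> Td -> Td) :=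
  forall i, (i.+1 < d)%N ->
    klinear (phiD i) /\
    forall x a c,
      phiD i (td (ins x i a c)) = Z i (phi (t2 (pair2 a c))) * td (ins x i 1 1).

(* defining relations of B wr H(d); h i stands for H_{i+1}, i < d-1 *)
Definition qwp_rels d (T2 Td : algType K) (Z : nat -> T2 -> Td)
  (sigD rhoD : nat -> Td -> Td) (S R : T2)
  (C : algType K) (f : Td -> C) (h : nat -> C) :=
  [/\ forall k, (k.+2 < d)%N -> h k * h k.+1 * h k = h k.+1 * h k * h k.+1,
      forall i j, (i.+1 < d)%N -> (j.+1 < d)%N -> (i.+1 < j)%N -> h i * h j = h j * h i,
      forall i, (i.+1 < d)%N -> h i * h i = f (Z i S) * h i + f (Z i R) &
      forall i b, (i.+1 < d)%N -> h i * f b = f (sigD i b) * h i + f (rhoD i b)].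

Definition is_qwp d (T2 Td : algType K) (Z : nat -> T2 -> Td)
  (sigD rhoD : nat -> Td -> Td) (S R : T2)
  (W : algType K) (iota : Td -> W) (H : nat -> W) :=
  [/\ alg_hom iota,
      qwp_rels d Z sigD rhoD S R iota H &
      forall (C : algType K) (f : Td -> C) (h : nat -> C),
        alg_hom f -> qwp_rels d Z sigD rhoD S R f h ->
        (exists g : W -> C, [/\ alg_hom g, (forall x, g (iota x) = f x) &
                               (forall i, (i.+1 < d)%N -> g (H i) = h i)]) /\
        (forall g1 g2 : W -> C, alg_hom g1 -> alg_hom g2 ->
           (forall x, g1 (iota x) = g2 (iota x)) ->
           (forall i, (i.+1 < d)%N -> g1 (H i) = g2 (H i)) ->
           forall y, g1 y = g2 y)].

End QWP.

(* simple reflection s_{i+1} = (i, i+1) in S_d (0-based), identity if out of range *)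
Definition sref d (i : nat) : 'S_d :=
  match (insub i : option 'I_d), (insub i.+1 : option 'I_d) with
  | Some a, Some b => tperm a b
  | _, _ => 1%g
  end.
Definition word_perm d (s : seq nat) : 'S_d := (\prod_(i <- s) sref d i)%g.
Definition reduced_word d (w : 'S_d) (s : seq nat) :=
  [/\ all (fun i => (i.+1 < d)%N) s, word_perm d s = w &
      forall s', all (fun i => (i.+1 < d)%N) s' -> word_perm d s' = w ->
        (size s <= size s')%N].
Definition Hword (W : nzRingType) (H : nat -> W) (s : seq nat) : W :=
  \prod_(i <- s) H i.

Definition has_PBW (K : comNzRingType) (B : algType K) (I : Type) (bas : I -> B)
  d (Td : algType K) (td : {ffun 'I_d -> B} -> Td)
  (W : algType K) (iota : Td -> W) (H : nat -> W) :=
  forall rw : 'S_d -> seq nat, (forall w, reduced_word w (rw w)) ->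
    is_basis (fun jw : {ffun 'I_d -> I} * 'S_d =>
                iota (td [ffun k => bas (jw.1 k)]) * Hword H (rw jw.2)).

Definition induced_star (K : comNzRingType) d (Td W : algType K)
  (iota : Td -> W) (H : nat -> W) (stard : Td -> Td) (psi : W -> W) :=
  [/\ alg_antihom psi,
      (forall b, psi (iota b) = iota (stard b)) &
      (forall i, (i.+1 < d)%N -> psi (H i) = H i)].

From HB Require Import structures.
From mathcomp Require Import all_boot all_order all_fingroup all_algebra.
From mathcomp Require Import boolp zify.
Set Implicit Arguments. Unset Strict Implicit. Unset Printing Implicit Defensive.
Import GRing.Theory.
Local Open Scope ring_scope.

(* An anti-homomorphism [psi] of [W] is an algebra map [W -> W^op]; by the
   presentation of [W] it exists iff [b |-> b^*] on [B^(x)d] and [H_i |-> H_i]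
   respect the defining relations in [W^op].  The braid and far commutation
   relations are symmetric.  Moving [H_i] to the right with
   [H_i b = sigma_i(b) H_i + rho_i(b)] turns the images of the quadratic and of
   the commutation relations into identities [x H_i + y = x' H_i + y'], which
   by the PBW basis and the injectivity of [Z_i] amount to (1) and (2).  If [*]
   is bijective, its inverse satisfies (1) and (2) as well, and the two induced
   maps are inverse to each other because their composites fix the generators. *)

(** * Linear algebra over a free module *)

Section KLinear.
Variables (K : comNzRingType) (M N : lmodType K) (f : M -> N) (f_lin : klinear f).
HB.instance Definition _ := GRing.isLinear.Build K M N *:%R f f_lin.

Lemma klinear0 : f 0 = 0. Proof. exact: linear0. Qed.
Lemma klinearD x y : f (x + y) = f x + f y. Proof. exact: linearD. Qed.
Lemma klinearB x y : f (x - y) = f x - f y. Proof. exact: linearB. Qed.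
End KLinear.

Section KLinearClosure.
Variable K : comNzRingType.

Lemma klinear_comp (M N P : lmodType K) (f : M -> N) (g : N -> P) :
  klinear f -> klinear g -> klinear (g \o f).
Proof. by move=> f_lin g_lin a x y /=; rewrite f_lin g_lin. Qed.

Lemma klinear0_fun (M N : lmodType K) : klinear (fun _ : M => 0 : N).
Proof. by move=> a x y; rewrite scaler0 addr0. Qed.

Lemma klinear_add (M N : lmodType K) (f g : M -> N) :
  klinear f -> klinear g -> klinear (fun x => f x + g x).
Proof. by move=> f_lin g_lin a x y; rewrite f_lin g_lin scalerDr addrACA. Qed.

Lemma klinear_mulr (A : algType K) (c : A) : klinear (fun x : A => x * c).
Proof. by move=> a x y; rewrite mulrDl -scalerAl. Qed.

Lemma klinear_mull (A : algType K) (c : A) : klinear (fun x : A => c * x).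
Proof. by move=> a x y; rewrite mulrDr scalerAr. Qed.

Lemma alg_hom_comp (A C D : algType K) (f : A -> C) (g : C -> D) :
  alg_hom f -> alg_hom g -> alg_hom (g \o f).
Proof.
move=> [f_lin fM f1] [g_lin gM g1]; split; first exact: klinear_comp.
- by move=> x y /=; rewrite fM gM.
- by rewrite /= f1 g1.
Qed.

Lemma alg_antihom_inv (A : algType K) (f g : A -> A) :
  alg_antihom f -> cancel f g -> cancel g f -> alg_antihom g.
Proof.
move=> [f_lin fM f1] fK gK; split.
- by move=> a x y; apply: (can_inj fK); rewrite f_lin !gK.
- by move=> x y; apply: (can_inj fK); rewrite fM !gK.
- by apply: (can_inj fK); rewrite f1 gK.
Qed.
End KLinearClosure.

Section OppositeAlgebra.
Variables (K : comNzRingType) (A : algType K).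

Definition opalg : Type := A.
HB.instance Definition _ := GRing.Lmodule.on opalg.
HB.instance Definition _ := GRing.NzRing.copy opalg A^c.

Lemma opalg_mulE (u v : opalg) : u * v = (v : A) * (u : A) :> A.
Proof. by []. Qed.

Lemma opalg_scalerAl (a : K) (u v : opalg) : a *: (u * v) = (a *: u : opalg) * v.
Proof. rewrite !opalg_mulE; exact: scalerAr. Qed.
HB.instance Definition _ := GRing.Lmodule_isLalgebra.Build K opalg opalg_scalerAl.

Lemma opalg_scalerAr (a : K) (u v : opalg) : a *: (u * v) = u * (a *: v : opalg).
Proof. rewrite !opalg_mulE; exact: (@scalerAl K A). Qed.
HB.instance Definition _ := GRing.Lalgebra_isAlgebra.Build K opalg opalg_scalerAr.
End OppositeAlgebra.

Section Combinations.
Variables (K : comNzRingType) (M : lmodType K) (J : eqType) (e : J -> M).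

(* Finite linear combinations as lists of (index, coefficient) pairs; indices may
   repeat, and [coef r j] collects the coefficients of [j]. *)
Definition comb (r : seq (J * K)) : M := \sum_(p <- r) p.2 *: e p.1.
Definition coef (r : seq (J * K)) (j : J) : K := \sum_(p <- r | p.1 == j) p.2.
Definition scale_comb (a : K) (r : seq (J * K)) := [seq (p.1, a * p.2) | p <- r].

Lemma comb_cat r s : comb (r ++ s) = comb r + comb s.
Proof. exact: big_cat. Qed.

Lemma coef_cat r s j : coef (r ++ s) j = coef r j + coef s j.
Proof. exact: big_cat. Qed.

Lemma comb_scale a r : comb (scale_comb a r) = a *: comb r.
Proof. by rewrite /comb big_map scaler_sumr; apply: eq_bigr => p _; rewrite scalerA. Qed.

Lemma coef_scale a r j : coef (scale_comb a r) j = a * coef r j.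
Proof. by rewrite /coef big_map mulr_sumr. Qed.

Lemma comb_ord n (k : 'I_n -> J) (c : 'I_n -> K) :
  \sum_(m < n) c m *: e (k m) = comb [seq (k m, c m) | m <- enum 'I_n].
Proof. by rewrite /comb big_map big_enum. Qed.

Lemma comb_coef r : comb r = \sum_(j <- undup (map fst r)) coef r j *: e j.
Proof.
have -> : \sum_(j <- undup (map fst r)) coef r j *: e j =
          \sum_(j <- undup (map fst r)) \sum_(p <- r | p.1 == j) p.2 *: e p.1.
  by apply: eq_bigr => j _; rewrite scaler_suml; apply: eq_bigr => p /eqP ->.
rewrite (exchange_big_dep predT) //= /comb !big_seq; apply: eq_bigr => p pr.
rewrite -big_filter (@eq_filter _ _ (pred1 p.1)); last by move=> j; exact: eq_sym.
by rewrite filter_pred1_uniq ?undup_uniq ?mem_undup ?map_f ?big_seq1.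
Qed.

Lemma comb_eq0 r : (forall j, coef r j = 0) -> comb r = 0.
Proof. by move=> coef0; rewrite comb_coef big1 // => j _; rewrite coef0 scale0r. Qed.

Lemma comb_nil : comb [::] = 0.
Proof. exact: big_nil. Qed.

Lemma comb_closed a x y : (exists r, x = comb r) -> (exists r, y = comb r) ->
  exists r, a *: x + y = comb r.
Proof.
by move=> [r ->] [s ->]; exists (scale_comb a r ++ s); rewrite comb_cat comb_scale.
Qed.

Lemma sum_comb_closed (I0 : Type) (r : seq (I0 * K)) (F : I0 -> M) :
  (forall i, exists s, F i = comb s) ->
  exists s, \sum_(q <- r) q.2 *: F q.1 = comb s.
Proof.
move=> F_comb; elim: r => [|q r IHr]; first by exists [::]; rewrite big_nil comb_nil.
by rewrite big_cons; apply: comb_closed.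
Qed.

Lemma spans_comb : spans e -> forall x, exists r, x = comb r.
Proof. by move=> span x; have [n [k [c ->]]] := span x; rewrite comb_ord; eexists. Qed.

Hypothesis e_indep : lin_indep e.

Lemma lin_indep_uniq (s : seq J) (a : J -> K) : uniq s ->
  \sum_(j <- s) a j *: e j = 0 -> forall j, j \in s -> a j = 0.
Proof.
move=> s_uniq; rewrite big_tnth => /e_indep sum0 j /(tnthP (in_tuple s))[m ->].
by apply: sum0; apply/tuple_uniqP.
Qed.

Lemma coef_eq0 r : comb r = 0 -> forall j, coef r j = 0.
Proof.
rewrite comb_coef => /lin_indep_uniq sum0 j.
have [jr|jNr] := boolP (j \in undup (map fst r)); first exact: sum0 (undup_uniq _) j jr.
rewrite /coef big_seq_cond big_pred0 // => p; apply/andP => -[pr /eqP pj].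
by move: jNr; rewrite mem_undup -pj map_f.
Qed.

Lemma coef_unique r s : comb r = comb s -> forall j, coef r j = coef s j.
Proof.
move=> eq_rs j; apply/eqP; rewrite -subr_eq0 -mulN1r -coef_scale -coef_cat.
by apply/eqP/coef_eq0; rewrite comb_cat comb_scale scaleN1r eq_rs subrr.
Qed.
End Combinations.

Lemma comb_linear (K : comNzRingType) (M N : lmodType K) (J : eqType) (e : J -> M)
  (g : M -> N) r : klinear g -> g (comb e r) = comb (g \o e) r.
Proof.
move=> g_lin; elim: r => [|p r IHr]; first by rewrite comb_nil (klinear0 g_lin) /comb big_nil.
by rewrite /comb !big_cons -/(comb e r) g_lin IHr.
Qed.

Lemma comb_map (K : comNzRingType) (M : lmodType K) (J J' : eqType) (e : J -> M)
  (f : J -> J') (e' : J' -> M) r :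
  e' \o f =1 e -> comb e' [seq (f p.1, p.2) | p <- r] = comb e r.
Proof. by move=> e'f; rewrite /comb big_map; apply: eq_bigr => p _; rewrite -e'f. Qed.

Lemma coef_map (K : comNzRingType) (J J' : eqType) (f : J -> J') (r : seq (J * K)) j :
  injective f -> coef [seq (f p.1, p.2) | p <- r] (f j) = coef r j.
Proof. by move=> f_inj; rewrite /coef big_map; apply: eq_bigl => p /=; rewrite inj_eq. Qed.

Lemma coef_map_out (K : comNzRingType) (J J' : eqType) (f : J -> J') (r : seq (J * K)) j' :
  (forall j, f j != j') -> coef [seq (f p.1, p.2) | p <- r] j' = 0.
Proof. by move=> f_out; rewrite /coef big_map big_pred0 // => p; exact/negbTE/f_out. Qed.

Section Coordinates.
Variables (K : comNzRingType) (M : lmodType K) (J : eqType) (e : J -> M).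
Hypothesis e_basis : is_basis e.

Definition coord (x : M) : J -> K :=
  coef (sval (cid (spans_comb (proj1 e_basis) x))).

Lemma coord_comb r j : coord (comb e r) j = coef r j.
Proof.
apply: (coef_unique (proj2 e_basis)).
exact/esym/(svalP (cid (spans_comb (proj1 e_basis) (comb e r)))).
Qed.

Lemma coord_linear j a x y : coord (a *: x + y) j = a * coord x j + coord y j.
Proof.
have [r ->] := spans_comb (proj1 e_basis) x.
have [s ->] := spans_comb (proj1 e_basis) y.
by rewrite -comb_scale -comb_cat !coord_comb coef_cat coef_scale.
Qed.

Lemma coord_basis j : coord (e j) j = 1.
Proof.
have -> : e j = comb e [:: (j, 1)] by rewrite /comb big_seq1 scale1r.
by rewrite coord_comb /coef big_mkcond big_seq1 /= eqxx.
Qed.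
End Coordinates.

Lemma unital_functional_exists (K : comNzRingType) (A : algType K) (J : eqType)
  (e : J -> A) : is_basis e ->
  exists phi : A -> K, (forall a x y, phi (a *: x + y) = a * phi x + phi y) /\ phi 1 = 1.
Proof.
move=> e_basis; have [[|[j0 c0] r] one_r] := spans_comb (proj1 e_basis) 1.
  by move: one_r; rewrite /comb big_nil => /eqP; rewrite oner_eq0.
exists (fun x => coord e_basis (e j0 * x) j0); split; last first.
  by rewrite mulr1 coord_basis.
by move=> a x y /=; rewrite mulrDr -scalerAr coord_linear.
Qed.

(** * Tensor powers *)

Record closed_prop (K : comNzRingType) (M : lmodType K) := ClosedProp {
  closed_mem :> M -> Prop;
  closed_mem0 : closed_mem 0;
  closed_memZD : forall a x y, closed_mem x -> closed_mem y -> closed_mem (a *: x + y) }.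

Section SubmoduleOfClosedProp.
Variables (K : comNzRingType) (M : lmodType K) (P : closed_prop M).

Definition pred_of_closed : {pred M} := fun x => `[< P x >].

Lemma pred_of_closed_subsemimod : subsemimod_closed pred_of_closed.
Proof.
split; first split.
- exact/asboolP/closed_mem0.
- move=> x y /asboolP Px /asboolP Py; apply/asboolP.
  by have := closed_memZD 1 Px Py; rewrite scale1r.
- move=> a x /asboolP Px; apply/asboolP.
  by have := closed_memZD a Px (closed_mem0 P); rewrite addr0.
Qed.

Record submod := Submod { submod_val :> M; _ : submod_val \in pred_of_closed }.
HB.instance Definition _ := [isSub for submod_val].
HB.instance Definition _ := [Choice of submod by <:].
HB.instance Definition _ :=
  GRing.SubChoice_isSubLmodule.Build K M pred_of_closed submod pred_of_closed_subsemimod.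
End SubmoduleOfClosedProp.

Section Multilinear.
Variables (K : comNzRingType) (B : algType K) (n : nat).
Implicit Types (x : {ffun 'I_n -> B}) (X : lmodType K).

Lemma upd_id x i : upd x i (x i) = x.
Proof. by apply/ffunP => j; rewrite ffunE; case: eqP => // ->. Qed.

Lemma upd_map (f : B -> B) x i u :
  [ffun j => f (upd x i u j)] = upd [ffun j => f (x j)] i (f u).
Proof. by apply/ffunP => j; rewrite !ffunE; case: eqP. Qed.

Lemma multilinear0 X (f : {ffun 'I_n -> B} -> X) : multilinear f ->
  forall x i, f (upd x i 0) = 0.
Proof. by move=> f_ml x i; have := f_ml x i (-1) 0 0; rewrite scaler0 add0r scaleN1r addNr. Qed.

Lemma multilinear_comb X (f : {ffun 'I_n -> B} -> X) (J : eqType) (e : J -> B) :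
  multilinear f -> forall x i r,
  f (upd x i (comb e r)) = \sum_(p <- r) p.2 *: f (upd x i (e p.1)).
Proof.
move=> f_ml x i; elim=> [|p r IHr]; first by rewrite comb_nil big_nil multilinear0.
by rewrite /comb !big_cons f_ml -IHr.
Qed.
End Multilinear.

Section TensorPower.
Variables (K : comNzRingType) (B : algType K) (n : nat) (T : algType K).
Variables (t : {ffun 'I_n -> B} -> T) (t_tensor : is_tensor_power t).

Lemma tensor_multilinear : multilinear t. Proof. by case: t_tensor. Qed.
Lemma tensor_one : t [ffun => 1] = 1. Proof. by case: t_tensor. Qed.
Lemma tensor_mul x y : t x * t y = t [ffun j => x j * y j]. Proof. by case: t_tensor. Qed.

Lemma tensor_lift (X : lmodType K) (f : {ffun 'I_n -> B} -> X) : multilinear f ->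
  exists g : T -> X, klinear g /\ forall x, g (t x) = f x.
Proof. by case: t_tensor => _ _ _ univ /univ[]. Qed.

Lemma tensor_linear_eq (X : lmodType K) (g1 g2 : T -> X) :
  klinear g1 -> klinear g2 -> (forall x, g1 (t x) = g2 (t x)) -> g1 =1 g2.
Proof.
have zero_ml : multilinear (fun _ : {ffun 'I_n -> B} => 0 : X).
  by move=> x i a u v; rewrite scaler0 addr0.
by case: t_tensor => _ _ _ /(_ X _ zero_ml)[_]; apply.
Qed.

(* Linear maps agreeing on pure tensors agree; apply this to the inclusion of
   the submodule cut out by [P] and to the identity. *)
Lemma tensor_ind (P : T -> Prop) : P 0 -> (forall a x y, P x -> P y -> P (a *: x + y)) ->
  (forall x, P (t x)) -> forall y, P y.
Proof.
move=> P0 P_closed Pt y.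
pose Q := ClosedProp P0 P_closed.
have t_in x : t x \in pred_of_closed Q by exact/asboolP.
pose f x : submod Q := Submod (t_in x).
have f_ml : multilinear f by move=> x i a u v; apply: val_inj; exact: tensor_multilinear.
have [g [g_lin gt]] := tensor_lift f_ml.
have val_g : (fun z => submod_val (g z)) =1 id.
  apply: tensor_linear_eq => [a u v /=|//|x /=]; first by rewrite g_lin.
  by rewrite gt.
by rewrite -(val_g y); apply/asboolP; exact: valP (g y).
Qed.

Section TensorBasis.
Variables (J : eqType) (bas : J -> B) (bas_basis : is_basis bas).

Definition tensor_basis (j : {ffun 'I_n -> J}) : T := t [ffun m => bas (j m)].

Lemma pure_tensor_comb (A : {set 'I_n}) (x : {ffun 'I_n -> B}) :
  (forall m, m \notin A -> exists j, x m = bas j) -> exists r, t x = comb tensor_basis r.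
Proof.
have [N] := ubnP #|A|; elim: N A x => // N IHN A x ltAN xA.
case: (set_0Vmem A) => [A0 | [p pA]].
  have x_bas m : exists j, x m = bas j by apply: xA; rewrite A0 inE.
  exists [:: ([ffun m => sval (cid (x_bas m))], 1)].
  rewrite /comb big_seq1 scale1r /tensor_basis; congr t.
  by apply/ffunP => m; rewrite !ffunE; exact: svalP (cid (x_bas m)).
have [r xp] := spans_comb (proj1 bas_basis) (x p).
rewrite -(upd_id x p) xp (multilinear_comb _ tensor_multilinear).
apply: (@sum_comb_closed _ _ _ _ _ r (fun j => t (upd x p (bas j)))) => j.
apply: (IHN (A :\ p)).
  by rewrite (cardsD1 p) pA in ltAN.
move=> m; rewrite ffunE in_setD1 negb_and negbK; case: eqP => [_ _|_ /= mA].
  by exists j.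
exact: xA.
Qed.

Lemma tensor_basis_spans y : exists r, y = comb tensor_basis r.
Proof.
elim/tensor_ind: y => [|a x z|x].
- by exists [::]; rewrite comb_nil.
- exact: comb_closed.
- by apply: (pure_tensor_comb (A := setT)) => m; rewrite inE.
Qed.
End TensorBasis.

Lemma tensor_ext_exists (f : B -> B) : klinear f -> exists F, tensor_ext t f F.
Proof.
move=> f_lin; have tf_ml : multilinear (fun x => t [ffun j => f (x j)]).
  by move=> x i a u v; rewrite !upd_map f_lin tensor_multilinear.
by have [F [F_lin Ft]] := tensor_lift tf_ml; exists F.
Qed.

Lemma tensor_ext_cancel (f g : B -> B) (F G : T -> T) :
  tensor_ext t f F -> tensor_ext t g G -> cancel g f -> cancel G F.
Proof.
move=> [F_lin Ft] [G_lin Gt] gK z.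
apply: (tensor_linear_eq (g2 := id) (klinear_comp G_lin F_lin)) => // x /=.
by rewrite Gt Ft; congr t; apply/ffunP => j; rewrite !ffunE gK.
Qed.

Lemma tensor_ext_antihom (star : B -> B) (starT : T -> T) :
  alg_antihom star -> tensor_ext t star starT -> alg_antihom starT.
Proof.
move=> [_ starM star1] [starT_lin starTt]; split=> // [u v|]; last first.
  by rewrite -tensor_one starTt; congr t; apply/ffunP => j; rewrite !ffunE star1.
have starT_mul x : forall u, starT (u * t x) = starT (t x) * starT u.
  apply: tensor_linear_eq => [||y /=].
  - exact: klinear_comp (klinear_mulr _) starT_lin.
  - exact: klinear_comp starT_lin (klinear_mull _).
  rewrite tensor_mul !starTt tensor_mul; congr t.
  by apply/ffunP => j; rewrite !ffunE starM.
move: v; apply: tensor_linear_eq => [||x /=]; last exact: starT_mul.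
- exact: klinear_comp (klinear_mull _) starT_lin.
- exact: klinear_comp starT_lin (klinear_mulr _).
Qed.
End TensorPower.

Section TensorSquare.
Variables (K : comNzRingType) (B : algType K) (T2 : algType K).
Variables (t2 : {ffun 'I_2 -> B} -> T2) (t2_tensor : is_tensor_power t2).

Lemma pair2_eta (x : {ffun 'I_2 -> B}) : x = pair2 (x ord0) (x ord_max).
Proof.
by apply/ffunP => -[[|[|//]] lt_j2]; rewrite ffunE /=; congr (x _); apply: val_inj.
Qed.

Lemma tensor_pair_linearl c a u v :
  t2 (pair2 (a *: u + v) c) = a *: t2 (pair2 u c) + t2 (pair2 v c).
Proof.
have pairE w : pair2 w c = upd (pair2 0 c) ord0 w.
  by apply/ffunP => -[[|m] lt_m2]; rewrite !ffunE.
by rewrite (pairE (a *: u + v)) (pairE u) (pairE v) tensor_multilinear.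
Qed.

Lemma tensor_pair_linearr c a u v :
  t2 (pair2 c (a *: u + v)) = a *: t2 (pair2 c u) + t2 (pair2 c v).
Proof.
have pairE w : pair2 c w = upd (pair2 c 0) ord_max w.
  by apply/ffunP => -[[|[|m]] lt_m2]; rewrite !ffunE.
by rewrite (pairE (a *: u + v)) (pairE u) (pairE v) tensor_multilinear.
Qed.
End TensorSquare.

Section AdjacentFactors.
Variables (K : comNzRingType) (B : algType K) (d : nat).
Variables (T2 : algType K) (t2 : {ffun 'I_2 -> B} -> T2).
Variables (Td : algType K) (td : {ffun 'I_d -> B} -> Td).
Hypotheses (t2_tensor : is_tensor_power t2) (td_tensor : is_tensor_power td).
Variables (Z : nat -> T2 -> Td) (Z_ins : is_Zins t2 td Z).
Variables (i : nat) (lt_i1d : (i.+1 < d)%N).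

Local Notation one := ([ffun => 1] : {ffun 'I_d -> B}).
Local Notation oi := (Ordinal (ltnW lt_i1d)).
Local Notation oi1 := (Ordinal lt_i1d).

Lemma Z_linear : klinear (Z i). Proof. by case: (Z_ins lt_i1d). Qed.

Lemma Z_tensor x : Z i (t2 x) = td (ins one i (x ord0) (x ord_max)).
Proof. by rewrite {1}(pair2_eta x); case: (Z_ins lt_i1d). Qed.

Lemma ins_mulr x a c : td (ins one i a c) * td (ins x i 1 1) = td (ins x i a c).
Proof.
rewrite tensor_mul //; congr td; apply/ffunP => j; rewrite !ffunE.
by case: eqP => _; [rewrite mulr1 | case: eqP => _; rewrite ?mulr1 ?mul1r].
Qed.

Lemma ins_mull x a c : td (ins x i 1 1) * td (ins one i a c) = td (ins x i a c).
Proof.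
rewrite tensor_mul //; congr td; apply/ffunP => j; rewrite !ffunE.
by case: eqP => _; [rewrite mul1r | case: eqP => _; rewrite ?mulr1 ?mul1r].
Qed.

Lemma Z_mulr_comm v x : Z i v * td (ins x i 1 1) = td (ins x i 1 1) * Z i v.
Proof.
move: v; apply: (tensor_linear_eq t2_tensor) => [||y].
- exact: klinear_comp Z_linear (klinear_mulr _).
- exact: klinear_comp Z_linear (klinear_mull _).
by rewrite /= Z_tensor ins_mulr ins_mull.
Qed.

Lemma tensor_split x : td x = Z i (t2 (pair2 (x oi) (x oi1))) * td (ins x i 1 1).
Proof.
rewrite Z_tensor ins_mulr !ffunE /=; congr td; apply/ffunP => j; rewrite !ffunE.
case: eqP => [ji|_]; first by congr (x _); apply: val_inj.
by case: eqP => [ji|//]; congr (x _); apply: val_inj.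
Qed.

Section Lift.
Variables (phi : T2 -> T2) (phiD : nat -> Td -> Td).
Hypotheses (phi_lin : klinear phi) (phiD_lift : is_lift t2 td Z phi phiD).

Lemma lift_linear : klinear (phiD i). Proof. by case: (phiD_lift lt_i1d). Qed.

Lemma lift_Z_mulr v x : phiD i (Z i v * td (ins x i 1 1)) = Z i (phi v) * td (ins x i 1 1).
Proof.
move: v; apply: (tensor_linear_eq t2_tensor) => [||y].
- exact: klinear_comp (klinear_comp Z_linear (klinear_mulr _)) lift_linear.
- exact: klinear_comp phi_lin (klinear_comp Z_linear (klinear_mulr _)).
by rewrite /= Z_tensor ins_mulr; case: (phiD_lift lt_i1d) => _ ->; rewrite -pair2_eta.
Qed.

Lemma lift_Z v : phiD i (Z i v) = Z i (phi v).
Proof.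
have := lift_Z_mulr v one.
have -> : ins one i 1 1 = one by apply/ffunP => j; rewrite !ffunE; case: ifP => //; case: ifP.
by rewrite tensor_one // !mulr1.
Qed.
End Lift.

Section Star.
Variables (star : B -> B) (star2 : T2 -> T2) (stard : Td -> Td).
Hypotheses (star_anti : alg_antihom star).
Hypotheses (star2_ext : tensor_ext t2 star star2) (stard_ext : tensor_ext td star stard).

Let star1 : star 1 = 1. Proof. by case: star_anti. Qed.

Lemma star_Z v : stard (Z i v) = Z i (star2 v).
Proof.
move: v; apply: (tensor_linear_eq t2_tensor) => [||y].
- exact: klinear_comp Z_linear (proj1 stard_ext).
- exact: klinear_comp (proj1 star2_ext) Z_linear.
rewrite /= (proj2 star2_ext) !Z_tensor (proj2 stard_ext) !ffunE; congr td.
by apply/ffunP => j; rewrite !ffunE; case: ifP => // _; case: ifP; rewrite ?star1.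
Qed.

Lemma star_Z_mulr v x : stard (Z i v * td (ins x i 1 1)) =
  Z i (star2 v) * td (ins [ffun j => star (x j)] i 1 1).
Proof.
have [_ stardM _] := tensor_ext_antihom td_tensor star_anti stard_ext.
rewrite stardM star_Z (proj2 stard_ext) Z_mulr_comm; congr (td _ * _).
by apply/ffunP => j; rewrite !ffunE; case: ifP => // _; case: ifP; rewrite ?ffunE ?star1.
Qed.

Variables (sigma rho : T2 -> T2) (sigD rhoD : nat -> Td -> Td).
Hypotheses (sigma_lin : klinear sigma) (rho_lin : klinear rho).
Hypotheses (sigD_lift : is_lift t2 td Z sigma sigD) (rhoD_lift : is_lift t2 td Z rho rhoD).

(* Write a pure tensor as [Z i u * c] with [c] trivial at [i, i+1]; then [sigD i],
   [rhoD i] and [stard] act on [u] alone. *)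
Lemma lift_star_compatible :
  (forall b, sigma (star2 (sigma b)) = star2 b /\ rho (star2 (sigma b)) + star2 (rho b) = 0) ->
  forall y, sigD i (stard (sigD i y)) = stard y /\
            rhoD i (stard (sigD i y)) + stard (rhoD i y) = 0.
Proof.
move=> star_compat y.
have sigD_lin := lift_linear sigD_lift; have rhoD_lin := lift_linear rhoD_lift.
have stard_lin := proj1 stard_ext.
have sigZ := lift_Z_mulr sigma_lin sigD_lift; have rhoZ := lift_Z_mulr rho_lin rhoD_lift.
split.
  move: y; apply: (tensor_linear_eq td_tensor) => [||x /=].
  - exact: klinear_comp (klinear_comp sigD_lin stard_lin) sigD_lin.
  - exact: stard_lin.
  by rewrite [td x](tensor_split x) sigZ !star_Z_mulr sigZ (proj1 (star_compat _)).
move: y; apply: (tensor_linear_eq td_tensor (g2 := fun _ => 0)) => [||x /=].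
- exact: klinear_add (klinear_comp (klinear_comp sigD_lin stard_lin) rhoD_lin)
                     (klinear_comp rhoD_lin stard_lin).
- exact: klinear0_fun.
rewrite [td x](tensor_split x) sigZ rhoZ !star_Z_mulr rhoZ.
by rewrite -mulrDl -(klinearD Z_linear) (proj2 (star_compat _)) (klinear0 Z_linear) mul0r.
Qed.
End Star.

(* A left inverse of [Z i]: contract the factors outside [i, i+1] with a linear
   form [phi] satisfying [phi 1 = 1]. *)
Lemma Z_inj (J : eqType) (bas : J -> B) : is_basis bas -> injective (Z i).
Proof.
move=> bas_basis; have [phi [phi_lin phi1]] := unital_functional_exists bas_basis.
pose outside (j : 'I_d) := (j != oi) && (j != oi1).
pose f (x : {ffun 'I_d -> B}) : T2 :=
  (\prod_(j | outside j) phi (x j)) *: t2 (pair2 (x oi) (x oi1)).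
have f_ml : multilinear f.
  move=> x p a u v; rewrite /f.
  have [p_out | p_in] := boolP (outside p).
    have pairE w : pair2 (upd x p w oi) (upd x p w oi1) = pair2 (x oi) (x oi1).
      case/andP: p_out => /negbTE poi /negbTE poi1.
      by rewrite !ffunE ![_ == p]eq_sym poi poi1.
    have prodE w : \prod_(j | outside j) phi (upd x p w j) =
                   phi w * \prod_(j | outside j && (j != p)) phi (x j).
      rewrite (bigD1 p) //= ffunE eqxx; congr (_ * _).
      by apply: eq_bigr => j /andP[_ /negbTE jp]; rewrite ffunE jp.
    by rewrite !pairE !prodE phi_lin mulrDl scalerDl scalerA mulrA.
  have prodE w : \prod_(j | outside j) phi (upd x p w j) = \prod_(j | outside j) phi (x j).
    by apply: eq_bigr => j j_out; rewrite ffunE; case: eqP => // jp; rewrite -jp j_out in p_in.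
  have oi_neq : (oi1 == oi) = false by rewrite -(inj_eq val_inj) /= gtn_eqF.
  rewrite !prodE !ffunE; move: p_in; rewrite negb_and !negbK.
  have [-> _|_ /= /eqP ->] := eqVneq p oi.
    by rewrite oi_neq tensor_pair_linearl // scalerDr !scalerA mulrC.
  by rewrite eqxx tensor_pair_linearr // scalerDr !scalerA mulrC.
have [g [g_lin gf]] := tensor_lift td_tensor f_ml.
have gZ : cancel (Z i) g.
  apply: (tensor_linear_eq t2_tensor (g2 := id)) (klinear_comp Z_linear g_lin) _ _ => // y.
  rewrite /= Z_tensor gf /f !ffunE /= !eqxx gtn_eqF //.
  rewrite big1 ?scale1r -?pair2_eta // => j.
  by rewrite /outside -!(inj_eq val_inj) /= !ffunE => /andP[/negbTE -> /negbTE ->].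
exact: can_inj gZ.
Qed.
End AdjacentFactors.

(** * Reduced words in the symmetric group *)

Section ReducedWords.
Variable d : nat.
Local Open Scope nat_scope.
Local Notation admissible := (all (fun i => i.+1 < d)).

Lemma word_perm_nil : word_perm d [::] = 1%g.
Proof. exact: big_nil. Qed.

Lemma word_perm_seq1 i : word_perm d [:: i] = sref d i.
Proof. exact: big_seq1. Qed.

Lemma word_perm_cat s1 s2 : word_perm d (s1 ++ s2) = (word_perm d s1 * word_perm d s2)%g.
Proof. exact: big_cat. Qed.

Lemma srefE (a b : 'I_d) : val b = (val a).+1 -> sref d (val a) = tperm a b.
Proof. by move=> ba; rewrite /sref valK -ba valK. Qed.

(* [(a, c+1) = (c, c+1) (a, c) (c, c+1)] for [a < c]. *)
Lemma tperm_word_gap k (a b : 'I_d) : b = a + k.+1 :> nat ->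
  exists s, admissible s /\ word_perm d s = tperm a b.
Proof.
elim: k b => [|k IHk] b b_gap.
  have ba : b = a.+1 :> nat by rewrite b_gap addn1.
  by exists [:: (a : nat)]; rewrite word_perm_seq1 (srefE ba) /= andbT -ba ltn_ord.
have lt_c_d : a + k.+1 < d by have := ltn_ord b; lia.
pose c := Ordinal lt_c_d.
have [s [s_adm s_ab]] := IHk c erefl.
have bc : b = c.+1 :> nat by rewrite b_gap /c /=; lia.
exists ((c : nat) :: s ++ [:: (c : nat)]); split.
  by rewrite /= all_cat s_adm /= andbT -bc ltn_ord.
rewrite -cat1s !word_perm_cat s_ab !word_perm_seq1 (srefE bc).
have ca : c != a by rewrite -(inj_eq val_inj) /c /=; lia.
have ba : b != a by rewrite -(inj_eq val_inj) /=; lia.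
by have := tpermJ a c (tperm c b); rewrite conjgE tpermV tpermL (tpermD ca ba).
Qed.

Lemma tperm_word (a b : 'I_d) : exists s, admissible s /\ word_perm d s = tperm a b.
Proof.
wlog lt_ab : a b / a < b => [tperm_lt|].
  have [/tperm_lt //|/tperm_lt|/val_inj ->] := ltngtP a b.
    by rewrite tpermC.
  by exists [::]; rewrite word_perm_nil tperm1.
by apply: (tperm_word_gap (k := b - a - 1)); lia.
Qed.

Lemma perm_word (w : 'S_d) : exists s, admissible s /\ word_perm d s = w.
Proof.
have [ts -> _] := prod_tpermP w; elim: ts => [|t ts [s [s_adm s_w]]].
  by exists [::]; rewrite word_perm_nil big_nil.
have [s1 [s1_adm s1_t]] := tperm_word t.1 t.2.
by exists (s1 ++ s); rewrite all_cat s1_adm s_adm word_perm_cat s1_t s_w big_cons.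
Qed.

Lemma reduced_word_exists (w : 'S_d) : exists s, reduced_word w s.
Proof.
pose P m := `[< exists s, [/\ size s = m, admissible s & word_perm d s = w] >].
have [s [s_adm s_w]] := perm_word w.
have P_size : P (size s) by apply/asboolP; exists s.
case: (ex_minnP (ex_intro P _ P_size)) => m /asboolP[s' [<- s'_adm s'_w]] s'_min.
by exists s'; split => // s'' s''_adm s''_w; apply: s'_min; apply/asboolP; exists s''.
Qed.

Lemma reduced_word1 s : reduced_word (1%g : 'S_d) s -> s = [::].
Proof. by case=> _ _ /(_ [::] erefl word_perm_nil); case: s. Qed.

Lemma sref_ord i (lt_i1d : (i.+1 < d)%N) :
  sref d i = tperm (Ordinal (ltnW lt_i1d)) (Ordinal lt_i1d).
Proof. by rewrite -(srefE (a := Ordinal (ltnW lt_i1d))). Qed.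

Lemma sref_neq1 i : (i.+1 < d)%N -> sref d i != 1%g.
Proof.
move=> lt_i1d; apply/eqP; rewrite sref_ord => /permP/(_ (Ordinal (ltnW lt_i1d))).
by rewrite tpermL perm1 => /(congr1 val) /=; lia.
Qed.

Lemma sref_inj i j : (i.+1 < d)%N -> (j.+1 < d)%N -> sref d j = sref d i -> j = i.
Proof.
move=> lt_i1d lt_j1d; rewrite !sref_ord => /permP/(_ (Ordinal (ltnW lt_i1d))).
rewrite tpermL; case: tpermP => [/(congr1 val) /= ij|/(congr1 val) /= ij|_ _];
  move=> /(congr1 val) /=; lia.
Qed.

Lemma reduced_word_sref i s : (i.+1 < d)%N -> reduced_word (sref d i) s -> s = [:: i].
Proof.
move=> lt_i1d [s_adm s_w /(_ [:: i])]; rewrite /= lt_i1d word_perm_seq1.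
move=> /(_ erefl erefl); case: s s_adm s_w => [|j [|//]] /=.
- by move=> _ s_w _; have := sref_neq1 lt_i1d; rewrite -s_w word_perm_nil eqxx.
- by rewrite andbT word_perm_seq1 => lt_j1d /(sref_inj lt_i1d lt_j1d) ->.
Qed.
End ReducedWords.

Definition reduced_choice d (w : 'S_d) : seq nat := sval (cid (reduced_word_exists w)).

Lemma reduced_choiceP d (w : 'S_d) : reduced_word w (reduced_choice w).
Proof. exact: svalP (cid (reduced_word_exists w)). Qed.

(** * The quantum wreath product *)

Definition star_compatible (V : zmodType) (S R : V) (sigma rho star : V -> V) :=
  (sigma (star S) = S /\ rho (star S) + star R = R) /\
  (forall b, sigma (star (sigma b)) = star b /\ rho (star (sigma b)) + star (rho b) = 0).

Lemma star_compatible_inv (V : zmodType) (S R : V) (sigma rho star star' : V -> V) :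
  {morph star : x y / x + y} -> cancel star star' -> cancel star' star ->
  star_compatible S R sigma rho star -> star_compatible S R sigma rho star'.
Proof.
move=> starD starK star'K [[sigS rhoS] compat].
have star0 : star 0 = 0 by apply: (addrI (star 0)); rewrite -starD !addr0.
have sigma_inj : injective sigma.
  move=> x y sigxy; apply: (can_inj starK).
  by rewrite -(proj1 (compat x)) sigxy (proj1 (compat y)).
have star_sig b : star (sigma (star' (sigma b))) = b.
  by apply: sigma_inj; rewrite (proj1 (compat _)) star'K.
have sig_star'S : sigma (star' S) = S.
  by apply: (can_inj starK); apply: sigma_inj; rewrite (proj1 (compat _)) star'K sigS.
split; [split => // | move=> b; split].
- apply: (can_inj starK); rewrite starD star'K.
  have := proj2 (compat (star' S)); rewrite sig_star'S addrC => /eqP.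
  by rewrite addr_eq0 => /eqP ->; rewrite -{1}rhoS addKr.
- by rewrite -[in RHS](star_sig b) starK.
- apply: (can_inj starK); rewrite starD star'K star0.
  by have := proj2 (compat (star' (sigma b))); rewrite star_sig addrC.
Qed.

Section QuantumWreathProduct.
Variables (K : comNzRingType) (B : algType K) (I : Type) (bas : I -> B) (d : nat).
Variables (T2 : algType K) (t2 : {ffun 'I_2 -> B} -> T2).
Variables (Td : algType K) (td : {ffun 'I_d -> B} -> Td).
Variables (S R : T2) (sigma rho : T2 -> T2).
Variables (Z : nat -> T2 -> Td) (sigD rhoD : nat -> Td -> Td).
Variables (W : algType K) (iota : Td -> W) (H : nat -> W).
Hypotheses (bas_basis : is_basis bas).
Hypotheses (t2_tensor : is_tensor_power t2) (td_tensor : is_tensor_power td).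
Hypotheses (sigma_lin : klinear sigma) (rho_lin : klinear rho) (Z_ins : is_Zins t2 td Z).
Hypotheses (sigD_lift : is_lift t2 td Z sigma sigD) (rhoD_lift : is_lift t2 td Z rho rhoD).
Hypothesis W_qwp : is_qwp d Z sigD rhoD S R iota H.

Lemma iota_hom : alg_hom iota. Proof. by case: W_qwp. Qed.
Let iota_lin : klinear iota. Proof. by case: iota_hom. Qed.

Lemma qwp_relations : qwp_rels d Z sigD rhoD S R iota H.
Proof. by case: W_qwp. Qed.

Lemma H_quadratic i : (i.+1 < d)%N -> H i * H i = iota (Z i S) * H i + iota (Z i R).
Proof. by case: W_qwp => _ [_ _ quad _] _; apply: quad. Qed.

Lemma H_commute_Z i b : (i.+1 < d)%N ->
  H i * iota (Z i b) = iota (Z i (sigma b)) * H i + iota (Z i (rho b)).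
Proof.
move=> lt_i1d; case: W_qwp => _ [_ _ _ comm] _.
by rewrite comm // (lift_Z t2_tensor td_tensor Z_ins lt_i1d sigma_lin sigD_lift)
  (lift_Z t2_tensor td_tensor Z_ins lt_i1d rho_lin rhoD_lift).
Qed.

Lemma qwp_rels_hom (C : algType K) (g : W -> C) : alg_hom g ->
  qwp_rels d Z sigD rhoD S R (g \o iota) (fun i => g (H i)).
Proof.
case=> g_lin gM _; case: W_qwp => _ [braid far quad comm] _; split.
- by move=> k lt_k2d; rewrite -!gM braid.
- by move=> i j lt_i1d lt_j1d lt_i1j; rewrite -!gM far.
- by move=> i lt_i1d; rewrite -gM quad // (klinearD g_lin) !gM.
- by move=> i b lt_i1d; rewrite -gM comm // (klinearD g_lin) !gM.
Qed.

Lemma qwp_hom_eq (C : algType K) (g1 g2 : W -> C) : alg_hom g1 -> alg_hom g2 ->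
  (forall x, g1 (iota x) = g2 (iota x)) -> (forall i, (i.+1 < d)%N -> g1 (H i) = g2 (H i)) ->
  g1 =1 g2.
Proof.
move=> g1_hom g2_hom g_iota g_H.
have [_ _ /(_ C _ _ (alg_hom_comp iota_hom g1_hom) (qwp_rels_hom g1_hom))[_ uniq]] := W_qwp.
exact: uniq.
Qed.

Section PBW.
Hypothesis W_PBW : has_PBW bas td iota H.

(* Expand [u] and [v] in the tensor basis; the PBW basis vectors indexed by
   [(j, s_i)] and [(j, 1)] are then distinct, since [s_i != 1]. *)
Lemma PBW_free i u v : (i.+1 < d)%N -> iota u * H i + iota v = 0 -> u = 0 /\ v = 0.
Proof.
move=> lt_i1d.
pose E (jw : {ffun 'I_d -> {classic I}} * 'S_d) :=
  iota (td [ffun k => bas (jw.1 k)]) * Hword H (reduced_choice jw.2).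
have E_indep : lin_indep E := proj2 (W_PBW (@reduced_choiceP d)).
have H_si : Hword H (reduced_choice (sref d i)) = H i.
  by rewrite (reduced_word_sref lt_i1d (reduced_choiceP _)) /Hword big_seq1.
have H_1 : Hword H (reduced_choice (1%g : 'S_d)) = 1.
  by rewrite (reduced_word1 (reduced_choiceP _)) /Hword big_nil.
pose Eb := @tensor_basis _ _ _ _ td {classic I} bas.
have Eb_spans y : exists r, y = comb Eb r.
  exact: (tensor_basis_spans td_tensor (J := {classic I}) bas_basis).
have [[ru ->] [rv ->]] := conj (Eb_spans u) (Eb_spans v); move=> uv0.
pose r := [seq ((p.1, sref d i), p.2) | p <- ru] ++ [seq ((p.1, 1%g), p.2) | p <- rv].
have r0 : comb E r = 0.
  rewrite comb_cat (comb_map (f := fun j => (j, sref d i)) (e := fun j => iota (Eb j) * H i)).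
    2: by move=> j; rewrite /E /= H_si.
  rewrite (comb_map (f := fun j => (j, 1%g)) (e := fun j => iota (Eb j))); last first.
    by move=> j; rewrite /E /= H_1 mulr1.
  rewrite -uv0 !(comb_linear _ _ iota_lin) /comb mulr_suml; congr (_ + _).
  by apply: eq_bigr => p _; rewrite -scalerAl.
have coef_r := coef_eq0 E_indep r0.
split; apply: comb_eq0 => j.
  have := coef_r (j, sref d i).
  rewrite coef_cat (coef_map (f := fun j => (j, sref d i))) => [|j1 j2 [] //].
  rewrite (coef_map_out (f := fun j => (j, 1%g))) ?addr0 // => j'.
  by rewrite xpair_eqE [1%g == _]eq_sym (negbTE (sref_neq1 lt_i1d)) andbF.
have := coef_r (j, 1%g).
rewrite coef_cat (coef_map (f := fun j => (j, 1%g))) => [|j1 j2 [] //].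
rewrite (coef_map_out (f := fun j => (j, sref d i))) ?add0r // => j'.
by rewrite xpair_eqE (negbTE (sref_neq1 lt_i1d)) andbF.
Qed.

Lemma PBW_unique i x y x' y' : (i.+1 < d)%N ->
  iota x * H i + iota y = iota x' * H i + iota y' -> x = x' /\ y = y'.
Proof.
move=> lt_i1d eq_xy.
have /PBW_free[] // : iota (x - x') * H i + iota (y - y') = 0.
  by rewrite !(klinearB iota_lin) mulrBl addrACA eq_xy addrACA -mulrBl !subrr mul0r addr0.
by move=> /subr0_eq -> /subr0_eq ->.
Qed.
End PBW.

Section Star.
Variables (star : B -> B) (star2 : T2 -> T2) (stard : Td -> Td).
Hypotheses (star_anti : alg_antihom star).
Hypotheses (star2_ext : tensor_ext t2 star star2) (stard_ext : tensor_ext td star stard).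

Lemma induced_star_Z psi i b c : (i.+1 < d)%N -> induced_star d iota H stard psi ->
  psi (iota (Z i b) * H i + iota (Z i c)) =
  iota (Z i (sigma (star2 b))) * H i + iota (Z i (rho (star2 b) + star2 c)).
Proof.
move=> lt_i1d [[psi_lin psiM _] psi_iota psi_H].
rewrite (klinearD psi_lin) psiM !psi_iota psi_H //.
rewrite !(star_Z t2_tensor Z_ins lt_i1d star_anti star2_ext stard_ext) H_commute_Z //.
by rewrite -addrA -(klinearD iota_lin) -(klinearD (Z_linear Z_ins lt_i1d)).
Qed.

(* Apply [psi] to the defining relations at [i = 0] and compare PBW coordinates. *)
Lemma induced_star_compatible psi : (2 <= d)%N -> has_PBW bas td iota H ->
  induced_star d iota H stard psi -> star_compatible S R sigma rho star2.
Proof.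
move=> lt_1d W_PBW psi_ind.
have Z0_inj := Z_inj t2_tensor td_tensor Z_ins lt_1d (J := {classic I}) bas_basis.
have [[_ psiM _] psi_iota psi_H] := psi_ind.
split.
  have := congr1 psi (H_quadratic lt_1d).
  rewrite psiM psi_H // induced_star_Z // H_quadratic //.
  by move=> /(PBW_unique W_PBW lt_1d)[/Z0_inj <- /Z0_inj <-].
move=> b; have := congr1 psi (H_commute_Z b lt_1d).
rewrite induced_star_Z // psiM psi_iota psi_H //.
rewrite (star_Z t2_tensor Z_ins lt_1d star_anti star2_ext stard_ext).
rewrite -[LHS]addr0 -(klinear0 iota_lin) -(klinear0 (Z_linear Z_ins lt_1d)).
by move=> /(PBW_unique W_PBW lt_1d)[/Z0_inj <- /Z0_inj <-].
Qed.

Lemma induced_star_exists : star_compatible S R sigma rho star2 ->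
  exists psi, induced_star d iota H stard psi.
Proof.
move=> [[sigS rhoS] compat].
have [stard_lin stardM stard1] := tensor_ext_antihom td_tensor star_anti stard_ext.
have [_ iotaM iota1] := iota_hom.
pose f (x : Td) : opalg W := iota (stard x).
have f_hom : alg_hom f.
  split; first exact: klinear_comp stard_lin iota_lin.
  - by move=> x y; rewrite /f stardM iotaM.
  - by rewrite /f stard1 iota1.
have f_rels : qwp_rels d Z sigD rhoD S R f (fun i => H i : opalg W).
  have [braid far quad comm] := qwp_relations.
  split=> [k lt_k2d | i j lt_i1d lt_j1d lt_i1j | i lt_i1d | i b lt_i1d]; rewrite !opalg_mulE.
  - by rewrite !mulrA braid.
  - by rewrite (far i j).
  - rewrite /f !(star_Z t2_tensor Z_ins lt_i1d star_anti star2_ext stard_ext).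
    rewrite H_commute_Z // sigS -addrA -(klinearD iota_lin).
    by rewrite -(klinearD (Z_linear Z_ins lt_i1d)) rhoS quad.
  - have [sigK rhoK] := lift_star_compatible t2_tensor td_tensor Z_ins lt_i1d
      star_anti star2_ext stard_ext sigma_lin rho_lin sigD_lift rhoD_lift compat b.
    by rewrite /f comm // sigK -addrA -(klinearD iota_lin) rhoK (klinear0 iota_lin) addr0.
have [_ _ /(_ _ _ _ f_hom f_rels)[[psi [psi_hom psi_iota psi_H]] _]] := W_qwp.
by exists psi.
Qed.
End Star.

Lemma induced_star_cancel (stard1 stard2 : Td -> Td) (psi1 psi2 : W -> W) :
  induced_star d iota H stard1 psi1 -> induced_star d iota H stard2 psi2 ->
  cancel stard2 stard1 -> cancel psi2 psi1.
Proof.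
move=> [[psi1_lin psi1M psi1_1] psi1_iota psi1_H] [[psi2_lin psi2M psi2_1] psi2_iota psi2_H].
move=> stardK; apply: (qwp_hom_eq (g2 := id)) => // [|x|i lt_i1d] /=.
- split; first exact: klinear_comp.
  + by move=> x y /=; rewrite psi2M psi1M.
  + by rewrite /= psi2_1 psi1_1.
- by rewrite psi2_iota psi1_iota stardK.
- by rewrite psi2_H // psi1_H.
Qed.

Lemma induced_star_antiaut (star : B -> B) (star2 : T2 -> T2) (stard : Td -> Td) psi :
  (2 <= d)%N -> has_PBW bas td iota H -> alg_antiaut star ->
  tensor_ext t2 star star2 -> tensor_ext td star stard ->
  induced_star d iota H stard psi -> alg_antiaut psi.
Proof.
move=> lt_1d W_PBW [star_anti [star' starK star'K]] star2_ext stard_ext psi_ind.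
have star'_anti := alg_antihom_inv star_anti starK star'K.
have [star'_lin _ _] := star'_anti.
have [star2' star2'_ext] := tensor_ext_exists t2_tensor star'_lin.
have [stard' stard'_ext] := tensor_ext_exists td_tensor star'_lin.
have compat := induced_star_compatible star_anti star2_ext stard_ext lt_1d W_PBW psi_ind.
have compat' : star_compatible S R sigma rho star2'.
  apply: star_compatible_inv compat.
  - exact: klinearD (proj1 star2_ext).
  - by move=> x; rewrite (tensor_ext_cancel t2_tensor star2'_ext star2_ext starK).
  - by move=> x; rewrite (tensor_ext_cancel t2_tensor star2_ext star2'_ext star'K).
have [psi' psi'_ind] := induced_star_exists star'_anti star2'_ext stard'_ext compat'.
split; first by case: psi_ind.
exists psi'.
- exact: induced_star_cancel psi'_ind psi_ind
    (tensor_ext_cancel td_tensor stard'_ext stard_ext starK).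
- exact: induced_star_cancel psi_ind psi'_ind
    (tensor_ext_cancel td_tensor stard_ext stard'_ext star'K).
Qed.
End QuantumWreathProduct.

Theorem theorem7p4 (K : comNzRingType) (B : algType K) (I : Type) (bas : I -> B)
  (d : nat)
  (T2 : algType K) (t2 : {ffun 'I_2 -> B} -> T2)
  (Td : algType K) (td : {ffun 'I_d -> B} -> Td)
  (S R : T2) (sigma rho : T2 -> T2)
  (Z : nat -> T2 -> Td) (sigD rhoD : nat -> Td -> Td)
  (W : algType K) (iota : Td -> W) (H : nat -> W)
  (star : B -> B) (star2 : T2 -> T2) (stard : Td -> Td) :
  (2 <= d)%N ->
  is_basis bas ->
  is_tensor_power t2 -> is_tensor_power td ->
  klinear sigma -> klinear rho ->
  is_Zins t2 td Z ->
  is_lift t2 td Z sigma sigD -> is_lift t2 td Z rho rhoD ->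
  is_qwp d Z sigD rhoD S R iota H ->
  has_PBW bas td iota H ->
  alg_antiaut star ->
  tensor_ext t2 star star2 -> tensor_ext td star stard ->
  ((exists psi : W -> W, induced_star d iota H stard psi) <->
     ((sigma (star2 S) = S /\ rho (star2 S) + star2 R = R) /\
      (forall b : T2, sigma (star2 (sigma b)) = star2 b /\
                      rho (star2 (sigma b)) + star2 (rho b) = 0)))
  /\ (forall psi : W -> W, induced_star d iota H stard psi -> alg_antiaut psi).
Proof.
move=> lt_1d bas_basis t2_tensor td_tensor sigma_lin rho_lin Z_ins sigD_lift rhoD_lift.
move=> W_qwp W_PBW star_aut star2_ext stard_ext.
have star_anti : alg_antihom star by case: star_aut.
have compatible := induced_star_compatible bas_basis t2_tensor td_tensor sigma_lin rho_lin
  Z_ins sigD_lift rhoD_lift W_qwp star_anti star2_ext stard_ext.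
have induced := induced_star_exists t2_tensor td_tensor sigma_lin rho_lin
  Z_ins sigD_lift rhoD_lift W_qwp star_anti star2_ext stard_ext.
have antiaut := induced_star_antiaut bas_basis t2_tensor td_tensor sigma_lin rho_lin
  Z_ins sigD_lift rhoD_lift W_qwp.
split; [split|].
- by move=> [psi /(compatible _ lt_1d W_PBW)].
- exact: induced.
- by move=> psi; apply: antiaut lt_1d W_PBW star_aut star2_ext stard_ext.
Qed.
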